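(* Let $\mathcal{L}_{ED}:=\{L_{\varepsilon,\delta}:\varepsilon\ge0,\delta\in[0,1]\}$. There exist $\varepsilon\ge0$ and $\delta\in[0,1]$ such that, with budget $B:=L_{\varepsilon,\delta}\in\mathcal{L}_{ED}$, the natural filter with queries in $\mathcal{L}_{ED}$ and query capacity $k=2$ is not free, i.e. $\mathrm{PLD}(\mathrm{Filter}_{\mathcal{L}_{ED},B,2})\not\preceq B$.
   Context: For $\varepsilon\ge0,\delta\in[0,1]$, $f_{\varepsilon,\delta}(\alpha):=\max\{0,1-\delta-e^\varepsilon\alpha,e^{-\varepsilon}(1-\delta-\alpha)\}$, and $L_{\varepsilon,\delta}$ is the PLD whose tradeoff curve is $f_{\varepsilon,\delta}$ (the tradeoff curve of a pair $(P,Q)$ being $\alpha\mapsto\inf\{\beta_\phi:\alpha_\phi\le\alpha\}$ over tests with Type I error under $P$ and Type II error under $Q$). A PLD is the law of $\log\frac{dP}{dQ}(\omega)$, $\omega\sim P$; $\mathrm{Id}=L_{0,0}$ is the point mass at 0. Fix datasets $D_1,D_2$; $\mathrm{PLD}(M):=\mathrm{PLD}(M(D_1)\|M(D_2))$; $\preceq$ is the Blackwell order on PLDs, $\oplus$ convolution, $\sup$ least upper bound. A privacy rule of length $k$ maps sequences $(L_1,\dots,L_{k'})$, $0\le k'<k$, to sets of PLDs containing $\mathrm{Id}$; a $\Gamma$-adversary is an adaptive composition $M_1\otimes\cdots\otimes M_k$ with $\mathrm{PLD}(M_i(\cdot;y_{<i}))\in\Gamma(L_1,\dots,L_{i-1})$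 for every history of outputs; $\mathrm{PLD}(\Gamma)$ is the sup over $\Gamma$-adversaries. $\mathrm{Filter}_{\mathcal{L},B,k}(L_1,\dots,L_{k'}):=\{L\in\mathcal{L}:L_1\oplus\cdots\oplus L_{k'}\oplus L\preceq B\}$; the natural filter is free for $(\mathcal{L},B,k)$ if $\mathrm{PLD}(\mathrm{Filter}_{\mathcal{L},B,k})\preceq B$. *)

From HB Require Import structures.
From mathcomp Require Import all_boot all_order all_algebra.
From mathcomp Require Import all_classical all_reals all_analysis.
Set Implicit Arguments. Unset Strict Implicit. Unset Printing Implicit Defensive.
Import Order.TTheory GRing.Theory Num.Theory.
Local Open Scope classical_set_scope.
Local Open Scope ring_scope.

Section PrivacyDefs.
Variable R : realType.

(* f_{eps,delta}(alpha) = max{0, 1 - delta - e^eps alpha, e^{-eps}(1 - delta - alpha)} :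
   the tradeoff curve of the PLD L_{eps,delta}. *)
Definition fED (eps delta alpha : R) : R :=
  Num.max 0 (Num.max (1 - delta - expR eps * alpha)
                     (expR (- eps) * (1 - delta - alpha))).

Definition is_test d (T : measurableType d) (phi : T -> R) : Prop :=
  measurable_fun [set: T] phi /\ (forall x, 0 <= phi x <= 1).

(* Generic tradeoff curve of a pair of laws, each given by its expectation
   functional EP (law under D1, Type I error) and EQ (law under D2, Type II):
   alpha |-> inf { 1 - E_Q[phi] : phi test, E_P[phi] <= alpha }. *)
Definition tradeoff_of d (T : measurableType d) (EP EQ : (T -> R) -> R)
  (alpha : R) : R :=
  inf [set 1 - EQ phi | phi in [set phi | is_test phi /\ EP phi <= alpha]].

Definition expect d (T : measurableType d) (mu : {measure set T -> \bar R})
  (phi : T -> R) : R := fine (\int[mu]_x (phi x)%:E)%E.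

Definition expect_comp d1 d2 (Y1 : measurableType d1) (Y2 : measurableType d2)
  (P1 : {measure set Y1 -> \bar R}) (K : Y1 -> {measure set Y2 -> \bar R})
  (phi : Y1 * Y2 -> R) : R :=
  fine (\int[P1]_y1 \int[K y1]_y2 (phi (y1, y2))%:E)%E.

Definition tradeoff d (T : measurableType d) (P Q : {measure set T -> \bar R}) :=
  tradeoff_of (expect P) (expect Q).

(* tradeoff curve of the product pair (P1 x P2, Q1 x Q2); its PLD is
   PLD(P1||Q1) (+) PLD(P2||Q2) (convolution) *)
Definition tradeoff_prod d1 d2 (Y1 : measurableType d1) (Y2 : measurableType d2)
  (P1 Q1 : {measure set Y1 -> \bar R}) (P2 Q2 : {measure set Y2 -> \bar R}) :=
  tradeoff_of (expect_comp P1 (fun _ => P2)) (expect_comp Q1 (fun _ => Q2)).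

(* tradeoff curve of the adaptive composition M1 (x) M2: joint laws of
   (y1, y2) with y1 ~ M1(D_j), y2 ~ M2(D_j; y1) *)
Definition tradeoff_adaptive d1 d2 (Y1 : measurableType d1) (Y2 : measurableType d2)
  (P1 Q1 : {measure set Y1 -> \bar R}) (K1 K2 : Y1 -> {measure set Y2 -> \bar R}) :=
  tradeoff_of (expect_comp P1 K1) (expect_comp Q1 K2).

(* Blackwell order, on PLDs given through their tradeoff curves:
   L  <=  L'  iff  T(L') <= T(L) pointwise on [0,1]. *)
Definition blackwell_le (TL TL' : R -> R) : Prop :=
  forall alpha, 0 <= alpha <= 1 -> TL' alpha <= TL alpha.

Definition in_LED (TL : R -> R) : Prop :=
  exists eps delta, 0 <= eps /\ 0 <= delta <= 1 /\
    forall alpha, 0 <= alpha <= 1 -> TL alpha = fED eps delta alpha.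

(* A Filter_{L_ED, B, 2}-adversary with B = L_{eps,delta}: mechanism M1 with
   output laws P1 = M1(D1), Q1 = M1(D2), and mechanism M2 given by probability
   kernels K1 = M2(D1; .), K2 = M2(D2; .).
   - step 1: PLD(M1) in L_ED and PLD(M1) <= B;
   - step 2: for every history y1, PLD(M2(.; y1)) in L_ED and
             PLD(M1) (+) PLD(M2(.; y1)) <= B. *)
Definition ED_filter_adversary2 (eps delta : R)
  d1 d2 (Y1 : measurableType d1) (Y2 : measurableType d2)
  (P1 Q1 : probability Y1 R) (K1 K2 : R.-pker Y1 ~> Y2) : Prop :=
  (in_LED (tradeoff P1 Q1) /\ blackwell_le (tradeoff P1 Q1) (fED eps delta))
  /\ forall y1 : Y1,
       in_LED (tradeoff (K1 y1) (K2 y1)) /\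
       blackwell_le (tradeoff_prod P1 Q1 (K1 y1) (K2 y1)) (fED eps delta).

(* The natural filter is free for (L_ED, L_{eps,delta}, 2):
   PLD(Filter) = sup of the PLDs of all Filter-adversaries is <= B, i.e.
   B is an upper bound of all these PLDs. *)
Definition ED_natural_filter_free2 (eps delta : R) : Prop :=
  forall (d1 d2 : measure_display) (Y1 : measurableType d1)
         (Y2 : measurableType d2) (P1 Q1 : probability Y1 R)
         (K1 K2 : R.-pker Y1 ~> Y2),
    ED_filter_adversary2 eps delta P1 Q1 K1 K2 ->
    blackwell_le (tradeoff_adaptive P1 Q1 K1 K2) (fED eps delta).

End PrivacyDefs.

From HB Require Import structures.
From mathcomp Require Import all_boot all_order all_algebra.
From mathcomp Require Import all_classical all_reals all_analysis.
From mathcomp Require Import lra measurable_realfun.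
Set Implicit Arguments.
Unset Strict Implicit.
Unset Printing Implicit Defensive.
Import Order.TTheory GRing.Theory Num.Theory.
Local Open Scope classical_set_scope.
Local Open Scope ring_scope.

(* The first query is randomized response with e^eps = 2,
   whose PLD is L_{ln 2, 0}.  On the answer y1 = true (the one favoured by D1)
   the second query has PLD L_{ln 3, 0}; on y1 = false it has PLD L_{0, 1/3}
   and reveals the dataset outright with probability 1/3.  Both products
   L_{ln 2, 0} (+) L_{ln 3, 0} and L_{ln 2, 0} (+) L_{0, 1/3} lie below
   B = L_{ln 2, 1/3}, so the natural filter admits both second queries.  Yet
   the adaptive composition is more revealing than either product: the test
   "reject iff y2 <> 0" has Type I error 7/18 and Type II error
   1/12 < 5/36 = f_{ln 2, 1/3}(7/18). *)

Section TradeoffCurveED.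
Variable R : realType.
Implicit Types eps delta alpha : R.

Lemma fED_ge0 eps delta alpha : 0 <= fED eps delta alpha.
Proof. by rewrite /fED le_max lexx. Qed.

Lemma fED_ge_steep eps delta alpha :
  1 - delta - expR eps * alpha <= fED eps delta alpha.
Proof. by rewrite /fED !le_max lexx orbT. Qed.

Lemma fED_ge_flat eps delta alpha :
  expR (- eps) * (1 - delta - alpha) <= fED eps delta alpha.
Proof. by rewrite /fED !le_max lexx !orbT. Qed.

Lemma fED_le_delta eps delta delta' alpha : delta <= delta' ->
  fED eps delta' alpha <= fED eps delta alpha.
Proof.
move=> le_delta; rewrite /fED !ge_max fED_ge0.
rewrite (le_trans _ (fED_ge_steep _ _ _)) ?(le_trans _ (fED_ge_flat _ _ _)) //.
- by rewrite ler_wpM2l ?expR_ge0 // lerB // lerB.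
- by rewrite lerB // lerB.
Qed.

End TradeoffCurveED.

Section Tests.
Variable R : realType.

Lemma is_test_cst d (T : measurableType d) (c : R) :
  0 <= c <= 1 -> is_test (fun _ : T => c).
Proof. by move=> c01; split=> [|_ //]; exact: measurable_cst. Qed.

Lemma test_ge0 d (T : measurableType d) (phi : T -> R) :
  is_test phi -> forall x, 0 <= phi x.
Proof. by move=> [_ phi01] x; case/andP: (phi01 x). Qed.

Lemma is_test_snd d1 d2 {Y1 : measurableType d1} (Y2 : measurableType d2)
    (phi : Y2 -> R) :
  is_test phi -> is_test (fun y : Y1 * Y2 => phi y.2).
Proof. by case=> mphi phi01; split=> // y; exact: measurableT_comp. Qed.

Lemma is_test_nat (phi : nat -> R) : (forall n, 0 <= phi n <= 1) -> is_test phi.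
Proof. by split=> // _ Y _. Qed.

Lemma is_test_bool (phi : bool -> R) : (forall b, 0 <= phi b <= 1) -> is_test phi.
Proof. by split=> // _ Y _. Qed.

End Tests.

Section TradeoffBounds.
Variables (R : realType) (d : measure_display) (T : measurableType d).
Implicit Types (EP EQ : (T -> R) -> R) (phi : T -> R) (eps delta alpha : R).

Lemma tradeoff_of_le EP EQ alpha phi :
  (forall psi, is_test psi -> EQ psi <= 1) -> is_test phi -> EP phi <= alpha ->
  tradeoff_of EP EQ alpha <= 1 - EQ phi.
Proof.
move=> EQ_le1 test_phi EP_phi; apply: ge_inf; last by exists phi.
by exists 0 => _ [psi [test_psi _] <-]; rewrite subr_ge0 EQ_le1.
Qed.

(* The hypothesis-testing form of (eps, delta)-DP, one inequality for each
   affine piece of fED; the bound EQ phi <= 1 is automatic for probability laws. *)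
Definition ed_indistinguishable eps delta EP EQ := forall phi, is_test phi ->
  [/\ EQ phi <= 1, EQ phi <= expR eps * EP phi + delta
    & 1 - EP phi <= expR eps * (1 - EQ phi) + delta].

Lemma fED_le_tradeoff_of eps delta EP EQ alpha : 0 <= alpha ->
  EP (fun=> 0) = 0 -> ed_indistinguishable eps delta EP EQ ->
  fED eps delta alpha <= tradeoff_of EP EQ alpha.
Proof.
move=> alpha_ge0 EP0 indist; apply: lb_le_inf.
  exists (1 - EQ (fun=> 0)), (fun=> 0) => //.
  by split; [apply: is_test_cst; rewrite lexx ler01 | rewrite EP0].
move=> _ [phi [/indist[EQ_le1 EQ_le EP_le] EP_phi] <-].
have e_gt0 := expR_gt0 eps.
rewrite /fED !ge_max subr_ge0 EQ_le1 /=; apply/andP; split.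
- have : expR eps * EP phi <= expR eps * alpha by rewrite ler_wpM2l // ltW.
  lra.
- rewrite expRN mulrC ler_pdivrMr //; lra.
Qed.

Lemma tradeoff_of_eq_fED eps delta EP EQ alpha : 0 <= alpha ->
  EP (fun=> 0) = 0 -> ed_indistinguishable eps delta EP EQ ->
  (exists phi, [/\ is_test phi, EP phi <= alpha & 1 - EQ phi <= fED eps delta alpha]) ->
  tradeoff_of EP EQ alpha = fED eps delta alpha.
Proof.
move=> alpha_ge0 EP0 indist [phi [test_phi EP_phi EQ_phi]].
apply/le_anti; rewrite fED_le_tradeoff_of // andbT.
by apply: le_trans EQ_phi; apply: tradeoff_of_le EP_phi => // psi /indist[].
Qed.

End TradeoffBounds.

Section Expectations.
Variable R : realType.

Lemma expect_cst0 d (T : measurableType d) (mu : {measure set T -> \bar R}) :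
  expect mu (fun=> 0) = 0.
Proof. by rewrite /expect integral0. Qed.

Lemma expect_comp_cst0 d1 d2 (Y1 : measurableType d1) (Y2 : measurableType d2)
    (P : {measure set Y1 -> \bar R}) (K : Y1 -> {measure set Y2 -> \bar R}) :
  expect_comp P K (fun=> 0) = 0.
Proof.
rewrite /expect_comp (eq_integral (fun=> 0%E)) ?integral0 // => y _.
exact: integral0.
Qed.

Lemma expect_bernoulli (p : R) (phi : bool -> R) : 0 <= p <= 1 ->
  (forall b, 0 <= phi b) ->
  expect (bernoulli_prob p) phi = p * phi true + (1 - p) * phi false.
Proof.
by move=> p01 phi_ge0; rewrite /expect integral_bernoulli_prob.
Qed.

Lemma expect_comp_bernoulli d (Y : measurableType d) (p : R)
    (K : bool -> {measure set Y -> \bar R}) (phi : bool * Y -> R) :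
  0 <= p <= 1 -> (forall x, 0 <= phi x) ->
  (forall b, (\int[K b]_y (phi (b, y))%:E)%E \is a fin_num) ->
  expect_comp (bernoulli_prob p) K phi =
    p * expect (K true) (fun y => phi (true, y))
    + (1 - p) * expect (K false) (fun y => phi (false, y)).
Proof.
move=> p01 phi_ge0 fin_K; rewrite /expect_comp integral_bernoulli_prob //.
  by rewrite /expect -(fineK (fin_K true)) -(fineK (fin_K false)).
by move=> b; apply: integral_ge0 => y _; rewrite lee_fin.
Qed.

End Expectations.

Section ThreePointMeasure.
Variable R : realType.
Implicit Types (a b c : {nonneg R}) (f : nat -> R).

Definition mu3 a b c : {measure set nat -> \bar R} :=
  measure_add (mscale a (@dirac _ nat 0%N R))
    (measure_add (mscale b (@dirac _ nat 1%N R)) (mscale c (@dirac _ nat 2%N R))).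

Lemma mu3_setT a b c : mu3 a b c [set: nat] = (a%:num + b%:num + c%:num)%:E.
Proof.
rewrite /mu3 /= /msum !big_ord_recl big_ord0 /= /msum !big_ord_recl big_ord0 /=.
by rewrite /mscale /= !diracT !mule1 !adde0 -!EFinD addrA.
Qed.

Lemma integral_mu3 a b c f : (forall n, 0 <= f n) ->
  (\int[mu3 a b c]_n (f n)%:E = (a%:num * f 0%N + b%:num * f 1%N + c%:num * f 2%N)%:E)%E.
Proof.
move=> f_ge0; have mf : measurable_fun [set: nat] (EFin \o f) by move=> _ Y _.
have f_ge0' n : [set: nat] n -> (0 <= (f n)%:E)%E by rewrite lee_fin.
rewrite !ge0_integral_measure_add // !ge0_integral_mscale // !integral_dirac //.
by rewrite !diracT !mul1e -!EFinM -!EFinD addrA.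
Qed.

Lemma expect_mu3 a b c f : (forall n, 0 <= f n) ->
  expect (mu3 a b c) f = a%:num * f 0%N + b%:num * f 1%N + c%:num * f 2%N.
Proof. by move=> f_ge0; rewrite /expect integral_mu3. Qed.

Lemma integral_mu3_fin_num a b c f : (forall n, 0 <= f n) ->
  (\int[mu3 a b c]_n (f n)%:E)%E \is a fin_num.
Proof. by move=> f_ge0; rewrite integral_mu3. Qed.

End ThreePointMeasure.

Section Counterexample.
Variable R : realType.

Lemma expR_ln2 : expR (ln 2) = 2 :> R.
Proof. by apply/eqP; rewrite lnK_eq. Qed.

Definition query1_D1 : probability bool R := bernoulli_prob (2/3).
Definition query1_D2 : probability bool R := bernoulli_prob (1/3).

Definition pure_D1 : {measure set nat -> \bar R} := mu3 (3/4)%:nng 0%:nng (1/4)%:nng.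
Definition pure_D2 : {measure set nat -> \bar R} := mu3 (1/4)%:nng 0%:nng (3/4)%:nng.
Definition approx_D1 : {measure set nat -> \bar R} := mu3 (1/3)%:nng (2/3)%:nng 0%:nng.
Definition approx_D2 : {measure set nat -> \bar R} := mu3 0%:nng (2/3)%:nng (1/3)%:nng.

Definition query2_D1 (y1 : bool) := if y1 then pure_D1 else approx_D1.
Definition query2_D2 (y1 : bool) := if y1 then pure_D2 else approx_D2.

HB.instance Definition _ :=
  isKernel.Build _ _ bool nat R query2_D1 (fun _ _ _ _ _ => I).
HB.instance Definition _ :=
  isKernel.Build _ _ bool nat R query2_D2 (fun _ _ _ _ _ => I).

Lemma query2_D1_setT y1 : query2_D1 y1 [set: nat] = 1%E.
Proof. by case: y1; rewrite /= mu3_setT /=; congr EFin; lra. Qed.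

Lemma query2_D2_setT y1 : query2_D2 y1 [set: nat] = 1%E.
Proof. by case: y1; rewrite /= mu3_setT /=; congr EFin; lra. Qed.

HB.instance Definition _ :=
  Kernel_isProbability.Build _ _ bool nat R query2_D1 query2_D1_setT.
HB.instance Definition _ :=
  Kernel_isProbability.Build _ _ bool nat R query2_D2 query2_D2_setT.

Lemma tradeoff_query1 alpha : 0 <= alpha <= 1 ->
  tradeoff query1_D1 query1_D2 alpha = fED (ln 2) 0 alpha.
Proof.
have p23 : 0 <= (2/3 : R) <= 1 by lra.
have p13 : 0 <= (1/3 : R) <= 1 by lra.
move=> /andP[alpha_ge0 alpha_le1]; apply: tradeoff_of_eq_fED => //.
- exact: expect_cst0.
- move=> phi test_phi; have [_ phi01] := test_phi; have phi_ge0 := test_ge0 test_phi.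
  rewrite !expect_bernoulli // expR_ln2.
  by move: (phi01 true) (phi01 false) => ? ?; split; lra.
have [alpha_small|alpha_big] := lerP alpha (1/3).
- pose phi (b : bool) := if b then 0 else 3 * alpha.
  have test_phi : is_test phi by apply: is_test_bool => -[]; rewrite /phi; lra.
  have phi_ge0 := test_ge0 test_phi.
  exists phi; rewrite !expect_bernoulli // /phi /=; split=> //; first lra.
  by rewrite (le_trans _ (fED_ge_steep _ _ _)) // expR_ln2; lra.
- pose phi (b : bool) := if b then (3 * alpha - 1) / 2 else 1.
  have test_phi : is_test phi by apply: is_test_bool => -[]; rewrite /phi; lra.
  have phi_ge0 := test_ge0 test_phi.
  exists phi; rewrite !expect_bernoulli // /phi /=; split=> //; first lra.
  by rewrite (le_trans _ (fED_ge_flat _ _ _)) // expRN expR_ln2; lra.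
Qed.

Lemma tradeoff_pure alpha : 0 <= alpha <= 1 ->
  tradeoff pure_D1 pure_D2 alpha = fED (ln 3) 0 alpha.
Proof.
have expR_ln3 : expR (ln 3) = 3 :> R by apply/eqP; rewrite lnK_eq.
move=> /andP[alpha_ge0 alpha_le1]; apply: tradeoff_of_eq_fED => //.
- exact: expect_cst0.
- move=> phi test_phi; have [_ phi01] := test_phi; have phi_ge0 := test_ge0 test_phi.
  rewrite !expect_mu3 //= expR_ln3.
  by move: (phi01 0%N) (phi01 1%N) (phi01 2%N) => ? ? ?; split; lra.
have [alpha_small|alpha_big] := lerP alpha (1/4).
- pose phi (n : nat) := if n is 2 then 4 * alpha else 0.
  have test_phi : is_test phi by apply: is_test_nat => -[|[|[|n]]]; rewrite /phi; lra.
  have phi_ge0 := test_ge0 test_phi.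
  exists phi; rewrite !expect_mu3 // /phi /=; split=> //; first lra.
  by rewrite (le_trans _ (fED_ge_steep _ _ _)) // expR_ln3; lra.
- pose phi (n : nat) := match n with 0 => (4 * alpha - 1) / 3 | 1 => 0 | _ => 1 end.
  have test_phi : is_test phi by apply: is_test_nat => -[|[|n]]; rewrite /phi; lra.
  have phi_ge0 := test_ge0 test_phi.
  exists phi; rewrite !expect_mu3 // /phi /=; split=> //; first lra.
  by rewrite (le_trans _ (fED_ge_flat _ _ _)) // expRN expR_ln3; lra.
Qed.

Lemma tradeoff_approx alpha : 0 <= alpha <= 1 ->
  tradeoff approx_D1 approx_D2 alpha = fED 0 (1/3) alpha.
Proof.
move=> /andP[alpha_ge0 alpha_le1]; apply: tradeoff_of_eq_fED => //.
- exact: expect_cst0.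
- move=> phi test_phi; have [_ phi01] := test_phi; have phi_ge0 := test_ge0 test_phi.
  rewrite !expect_mu3 //= expR0.
  by move: (phi01 0%N) (phi01 1%N) (phi01 2%N) => ? ? ?; split; lra.
have [alpha_small|alpha_big] := lerP alpha (2/3).
- pose phi (n : nat) := match n with 0 => 0 | 1 => 3 * alpha / 2 | _ => 1 end.
  have test_phi : is_test phi by apply: is_test_nat => -[|[|n]]; rewrite /phi; lra.
  have phi_ge0 := test_ge0 test_phi.
  exists phi; rewrite !expect_mu3 // /phi /=; split=> //; first lra.
  by rewrite (le_trans _ (fED_ge_steep _ _ _)) // expR0; lra.
- pose phi (n : nat) := if n is 0 then 3 * alpha - 2 else 1.
  have test_phi : is_test phi by apply: is_test_nat => -[|n]; rewrite /phi; lra.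
  have phi_ge0 := test_ge0 test_phi.
  exists phi; rewrite !expect_mu3 // /phi /=; split=> //; first lra.
  by rewrite (le_trans _ (fED_ge0 _ _ _)) //; lra.
Qed.

Lemma query2_D1_integral_fin_num y1 (f : nat -> R) : (forall n, 0 <= f n) ->
  (\int[query2_D1 y1]_n (f n)%:E)%E \is a fin_num.
Proof. by case: y1; exact: integral_mu3_fin_num. Qed.

Lemma query2_D2_integral_fin_num y1 (f : nat -> R) : (forall n, 0 <= f n) ->
  (\int[query2_D2 y1]_n (f n)%:E)%E \is a fin_num.
Proof. by case: y1; exact: integral_mu3_fin_num. Qed.

Lemma fED_le_tradeoff_prod_query y1 alpha : 0 <= alpha ->
  fED (ln 2) (1/3) alpha <= tradeoff_prod query1_D1 query1_D2
    (query2_D1 y1) (query2_D2 y1) alpha.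
Proof.
have p23 : 0 <= (2/3 : R) <= 1 by lra.
have p13 : 0 <= (1/3 : R) <= 1 by lra.
move=> alpha_ge0; apply: fED_le_tradeoff_of => //; first exact: expect_comp_cst0.
move=> phi test_phi; have [_ phi01] := test_phi; have phi_ge0 := test_ge0 test_phi.
have fin1 b : (\int[query2_D1 y1]_n (phi (b, n))%:E)%E \is a fin_num.
  exact: query2_D1_integral_fin_num.
have fin2 b : (\int[query2_D2 y1]_n (phi (b, n))%:E)%E \is a fin_num.
  exact: query2_D2_integral_fin_num.
rewrite !expect_comp_bernoulli // expR_ln2.
move: (phi01 (true, 0%N)) (phi01 (true, 1%N)) (phi01 (true, 2%N)) => ? ? ?.
move: (phi01 (false, 0%N)) (phi01 (false, 1%N)) (phi01 (false, 2%N)) => ? ? ?.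
by case: y1 {fin1 fin2}; rewrite /= !expect_mu3 //=; split; lra.
Qed.

Lemma tradeoff_adaptive_query_le : tradeoff_adaptive query1_D1 query1_D2
  query2_D1 query2_D2 (7/18) <= 1/12.
Proof.
have p23 : 0 <= (2/3 : R) <= 1 by lra.
have p13 : 0 <= (1/3 : R) <= 1 by lra.
pose rejects (n : nat) : R := if n is 0 then 0 else 1.
have test_rejects : is_test rejects.
  by apply: is_test_nat => -[|n]; rewrite /rejects; lra.
have test_phi : is_test (fun y : bool * nat => rejects y.2) := is_test_snd test_rejects.
have phi_ge0 := test_ge0 test_phi.
have rejects_ge0 := test_ge0 test_rejects.
apply: le_trans (tradeoff_of_le _ test_phi _) _.
- move=> psi test_psi; have [_ psi01] := test_psi; have psi_ge0 := test_ge0 test_psi.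
  rewrite expect_comp_bernoulli // => [|b]; last exact: query2_D2_integral_fin_num.
  rewrite /= !expect_mu3 //=.
  move: (psi01 (true, 0%N)) (psi01 (true, 1%N)) (psi01 (true, 2%N)) => ? ? ?.
  by move: (psi01 (false, 0%N)) (psi01 (false, 1%N)) (psi01 (false, 2%N)) => ? ? ?; lra.
- rewrite expect_comp_bernoulli // => [|b]; last exact: query2_D1_integral_fin_num.
  by rewrite /= !expect_mu3 //= /rejects /=; lra.
rewrite expect_comp_bernoulli // => [|b]; last exact: query2_D2_integral_fin_num.
by rewrite /= !expect_mu3 //= /rejects /=; lra.
Qed.

Lemma query_filter_adversary : ED_filter_adversary2 (ln 2) (1/3)
  query1_D1 query1_D2 query2_D1 query2_D2.
Proof.
have ln2_ge0 : 0 <= ln (2 : R) by rewrite ln_ge0 // ler1n.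
have ln3_ge0 : 0 <= ln (3 : R) by rewrite ln_ge0 // ler1n.
split; [split|move=> y1; split].
- by exists (ln 2), 0; do 2?split; rewrite ?lexx ?ler01 //; exact: tradeoff_query1.
- by move=> alpha alpha01; rewrite tradeoff_query1 // fED_le_delta //; lra.
- case: y1.
    by exists (ln 3), 0; do 2?split; rewrite ?lexx ?ler01 //; exact: tradeoff_pure.
  by exists 0, (1/3); do 2?split; rewrite ?lexx //; [lra | exact: tradeoff_approx].
- by move=> alpha /andP[alpha_ge0 _]; exact: fED_le_tradeoff_prod_query.
Qed.

End Counterexample.

Theorem corollary5p3 (R : realType) :
  exists eps delta : R, 0 <= eps /\ 0 <= delta <= 1 /\
    ~ ED_natural_filter_free2 eps delta.
Proof.
exists (ln 2), (1/3); split; first by rewrite ln_ge0 // ler1n.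
split; first lra.
have alpha01 : 0 <= (7/18 : R) <= 1 by lra.
move=> /(_ _ _ _ _ _ _ _ _ (query_filter_adversary R) _ alpha01).
have := fED_ge_flat (ln 2) (1/3) (7/18 : R).
have := tradeoff_adaptive_query_le R.
rewrite expRN expR_ln2; lra.
Qed.
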